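(* Let $(\Omega,\mathcal E_\Omega)$ be a finite-dimensional generalized probabilistic theory whose state space $\Omega$ is transitive and whose positive cone $V_+$ is self-dual with respect to $\langle\cdot,\cdot\rangle_{GL(\Omega)}$. Let $F=\{f_a\}_{a\in A}$ and $G=\{g_b\}_{b\in B}$ be ideal observables on $\Omega$, whose outcome sets $(A,d_A)$ and $(B,d_B)$ are finite metric spaces, and let $\widetilde M^{FG}=\{\widetilde m^{FG}_{ab}\}_{(a,b)\in A\times B}$ be an arbitrary observable on $A\times B$ (an approximate joint observable of $(F,G)$) with marginals $\widetilde M^F=\{\sum_{b}\widetilde m^{FG}_{ab}\}_{a\in A}$ and $\widetilde M^G=\{\sum_a\widetilde m^{FG}_{ab}\}_{b\in B}$. Then for all $\epsilon_1,\epsilon_2\in[0,1]$ with $\epsilon_1+\epsilon_2\le 1$ there exists a state $\omega\in\Omega$ such that $$\mathcal W_{\epsilon_1}(\widetilde M^F,F)\ge W_{\epsilon_1+\epsilon_2}(\omega^F),\qquad \mathcal W_{\epsilon_2}(\widetilde M^G,G)\ge W_{\epsilon_1+\epsilon_2}(\omega^G).$$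
   Context: Setting: $V=\mathbb R^{N+1}$ with Euclidean inner product $(\cdot,\cdot)_E$. A state space $\Omega\subset V$ is a compact convex set with $\mathrm{span}(\Omega)=V$ and $0\notin\mathrm{aff}(\Omega)$; $V_+=\{\lambda\omega:\lambda\ge0,\omega\in\Omega\}$; the unit effect $u\in V^*$ satisfies $u(\omega)=1$ for all $\omega\in\Omega$; effects are $\mathcal E_\Omega=\{e\in V^*:0\le e(\omega)\le1\ \forall\omega\in\Omega\}$. An observable with finite outcome set $X$ is a family $\{e_x\}_{x\in X}$ of effects with $\sum_x e_x=u$ (the trivial observable $\{u\}$ is not considered). $\Omega^{\mathrm{ext}}$ denotes the extreme points of $\Omega$. An effect is pure if it is an extreme point of $\mathcal E_\Omega$, and indecomposable if $e\neq0$ and any decomposition $e=e_1+e_2$ with $e_1,e_2\in\mathcal E_\Omega$ forces $e_1,e_2$ to be scalar multiples of $e$. An observable $F=\{f_a\}_{a\in A}$ is ideal if for each $a$, either $f_a=\sum_{i\in I_a}e_i$ or $f_a=u-\sum_{i\in I_a}e_i$ for a finite family $\{e_i\}_{i\in I_a}$ of pure indecomposable effects. $GL(\Omega)$ is the (compact) group of linear bijections $T:V\to V$ with $T(\Omega)=\Omega$, $\mu$ its normalized Haar measure, and $\langle x,y\rangle_{GL(\Omega)}=\int_{GL(\Omega)}(Tx,Ty)_E\,d\mu(T)$. $\Omega$ is transitive if $GL(\Omega)$ acts transitively on $\Omega^{\mathrm{ext}}$. The internal dual cone is $V^{*int}_+=\{y\in V:\langle x,y\rangle_{GL(\Omega)}\ge0\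 \forall x\in V_+\}$, and $V_+$ is self-dual with respect to $\langle\cdot,\cdot\rangle_{GL(\Omega)}$ if $V_+=V^{*int}_+$. For a state $\omega$ and observable $F$, $\omega^F=\{f_a(\omega)\}_{a\in A}$. For a finite metric space $(A,d_A)$, $O_{d_A}(a;w)=\{x\in A:d_A(x,a)\le w/2\}$. Overall width: $W_\epsilon(\omega^F)=\inf\{w>0:\exists a\in A,\ \sum_{a'\in O_{d_A}(a;w)}f_{a'}(\omega)\ge1-\epsilon\}$. Error bar width of an observable $\widetilde F=\{\widetilde f_a\}_{a\in A}$ relative to ideal $F$: $\mathcal W_\epsilon(\widetilde F,F)=\inf\{w>0:\forall a\in A,\forall\omega\in\Omega,\ f_a(\omega)=1\Rightarrow\sum_{a'\in O_{d_A}(a;w)}\widetilde f_{a'}(\omega)\ge1-\epsilon\}$. *)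

From HB Require Import structures.
From mathcomp Require Import all_boot all_order all_algebra.
From mathcomp Require Import all_classical all_reals all_analysis.
Set Implicit Arguments.
Unset Strict Implicit.
Unset Printing Implicit Defensive.
Import Order.TTheory GRing.Theory Num.Theory.
Import numFieldTopology.Exports numFieldNormedType.Exports.
Local Open Scope classical_set_scope.
Local Open Scope ring_scope.

Section GPT.
Variables (R : realType) (N : nat).

(* V = R^{N+1}, as row vectors.  The dual V^* is identified with row vectors
   through the coordinate pairing [pair e x] (= e(x)). *)
Notation vec := ('rV[R]_(N.+1)) (only parsing).
Notation dualv := ('rV[R]_(N.+1)) (only parsing).

Definition dotE (x y : vec) : R := \sum_(i < N.+1) x ord0 i * y ord0 i.
Definition pair (e : dualv) (x : vec) : R := \sum_(i < N.+1) e ord0 i * x ord0 i.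

Definition convex_set (S : set vec) : Prop :=
  forall x y t, S x -> S y -> 0 <= t <= 1 -> S (t *: x + (1 - t) *: y).

Definition spans (S : set vec) : Prop :=
  forall v : vec, exists (n : nat) (c : 'I_n -> R) (w : 'I_n -> vec),
    (forall i, S (w i)) /\ v = \sum_(i < n) c i *: w i.

Definition in_aff (S : set vec) (v : vec) : Prop :=
  exists (n : nat) (c : 'I_n -> R) (w : 'I_n -> vec),
    (forall i, S (w i)) /\ \sum_(i < n) c i = 1 /\ v = \sum_(i < n) c i *: w i.

Definition state_space (Om : set vec) : Prop :=
  [/\ compact Om, convex_set Om, spans Om & ~ in_aff Om 0].

Definition extreme {T : lmodType R} (S : set T) (x : T) : Prop :=
  S x /\ forall y z t, S y -> S z -> 0 < t < 1 -> x = t *: y + (1 - t) *: z ->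
    y = x /\ z = x.

Definition unit_effect (Om : set vec) (u : dualv) : Prop :=
  forall w, Om w -> pair u w = 1.

Definition effects (Om : set vec) : set dualv :=
  [set e | forall w, Om w -> 0 <= pair e w <= 1].

Definition pure_effect (Om : set vec) (e : dualv) : Prop := extreme (effects Om) e.

Definition indecomposable (Om : set vec) (e : dualv) : Prop :=
  e <> 0 /\ forall e1 e2, effects Om e1 -> effects Om e2 -> e = e1 + e2 ->
    (exists c : R, e1 = c *: e) /\ (exists c : R, e2 = c *: e).

Definition observable (Om : set vec) (u : dualv) (X : finType) (f : X -> dualv) : Prop :=
  (forall x, effects Om (f x)) /\ \sum_(x : X) f x = u.

Definition ideal_observable (Om : set vec) (u : dualv) (X : finType) (f : X -> dualv) : Prop :=
  observable Om u f /\
  forall x, exists (n : nat) (e : 'I_n -> dualv),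
    (forall i, pure_effect Om (e i) /\ indecomposable Om (e i)) /\
    (f x = \sum_(i < n) e i \/ f x = u - \sum_(i < n) e i).

(* GL(Omega): linear bijections T (acting as v |-> v *m T) with T(Omega) = Omega *)
Definition GLOm (Om : set vec) : set 'M[R]_(N.+1) :=
  [set T | T \in unitmx /\ [set v *m T | v in Om] = Om].

Definition transitive_Om (Om : set vec) : Prop :=
  forall w1 w2, extreme Om w1 -> extreme Om w2 ->
    exists2 T, GLOm Om T & w1 *m T = w2.

(* I is the Haar integral (normalized Haar measure mu) on the compact group
   GL(Omega), given as a normalized, positive, left-invariant linear functional
   on the real continuous functions on GL(Omega). *)
Definition haar_integral (Om : set vec) (I : ('M[R]_(N.+1) -> R) -> R) : Prop :=
  let G := GLOm Om in
  [/\ (forall f g : 'M[R]_(N.+1) -> R, {within G, continuous f} -> {within G, continuous g} ->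
         I (fun T => f T + g T) = I f + I g),
      (forall (c : R) (f : 'M[R]_(N.+1) -> R), {within G, continuous f} -> I (fun T => c * f T) = c * I f),
      (forall f : 'M[R]_(N.+1) -> R, {within G, continuous f} -> (forall T, G T -> 0 <= f T) -> 0 <= I f),
      I (fun _ => 1) = 1 &
      (forall S (f : 'M[R]_(N.+1) -> R), G S -> {within G, continuous f} -> I (fun T => f (S *m T)) = I f)].

Definition ip_GL (I : ('M[R]_(N.+1) -> R) -> R) (x y : vec) : R :=
  I (fun T => dotE (x *m T) (y *m T)).

Definition cone (Om : set vec) : set vec :=
  [set v | exists l w, 0 <= l /\ Om w /\ v = l *: w].

Definition internal_dual_cone (Om : set vec) (I : ('M[R]_(N.+1) -> R) -> R) : set vec :=
  [set y | forall x, cone Om x -> 0 <= ip_GL I x y].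

Definition self_dual (Om : set vec) (I : ('M[R]_(N.+1) -> R) -> R) : Prop :=
  cone Om = internal_dual_cone Om I.

Definition metric (A : finType) (d : A -> A -> R) : Prop :=
  [/\ forall x y, 0 <= d x y, forall x y, d x y = 0 <-> x = y,
      forall x y, d x y = d y x & forall x y z, d x z <= d x y + d y z].

Definition ball_w (A : finType) (d : A -> A -> R) (a : A) (w : R) : pred A :=
  fun x => d x a <= w / 2.

Definition overall_width (A : finType) (d : A -> A -> R) (f : A -> dualv)
    (eps : R) (om : vec) : R :=
  inf [set w : R | 0 < w /\ exists a : A,
        1 - eps <= \sum_(a' in ball_w d a w) pair (f a') om].

Definition error_bar_width (Om : set vec) (A : finType) (d : A -> A -> R)
    (ft f : A -> dualv) (eps : R) : R :=
  inf [set w : R | 0 < w /\ forall (a : A) (om : vec), Om om -> pair (f a) om = 1 ->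
        1 - eps <= \sum_(a' in ball_w d a w) pair (ft a') om].

Definition marginalA (A B : finType) (m : A * B -> dualv) : A -> dualv :=
  fun a => \sum_(b : B) m (a, b).
Definition marginalB (A B : finType) (m : A * B -> dualv) : B -> dualv :=
  fun b => \sum_(a : A) m (a, b).

End GPT.

From HB Require Import structures.
From mathcomp Require Import all_boot all_order all_algebra.
From mathcomp Require Import all_classical all_reals all_analysis.
From mathcomp Require Import ring lra.
Import Order.TTheory GRing.Theory Num.Theory.
Import numFieldTopology.Exports numFieldNormedType.Exports.
Local Open Scope classical_set_scope.
Local Open Scope ring_scope.

(* Self-duality makes the Haar inner product B nondegenerate, so every effect e is
   represented by a vector [rep e] of the cone, e = B (rep e) _.  By compactness and
   transitivity all pure states maximise B w w; for a pure indecomposable effect e this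
   forces the pure state proportional to [rep e] to give e the value 1, and by linearity
   every effect f of an ideal observable satisfies f (rep f) = u (rep f).
   Testing the error-bar conditions against the vectors [rep (f a)] and exchanging the
   two ball sums (the metrics are symmetric) shows that, weighted by u (rep (m p)), the
   outcomes p of the joint observable satisfy both conditions on average.  Hence some p
   satisfies them individually, and the state proportional to [rep (m p)] witnesses both
   inequalities.  The infima defining the widths are attained because the balls of a
   finite metric space only change at finitely many radii. *)

Section MatrixContinuity.
Context {R : realType}.

Lemma continuous_sum (T : topologicalType) (J : finType) (F : J -> T -> R) :
  (forall j, continuous (F j)) -> continuous (fun t => \sum_j F j t).
Proof. by move=> cF; apply: continuous_big => //; exact: add_continuous. Qed.

Lemma continuous_mulmxl_coord m n p (M : 'M[R]_(m, n)) i j :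
  continuous (fun X : 'M[R]_(n, p) => (M *m X) i j).
Proof.
under eq_fun do rewrite mxE.
apply: continuous_sum => k X; apply: continuousM; first exact: cst_continuous.
exact: coord_continuous.
Qed.

Lemma continuous_mulmxr_coord m n p (M : 'M[R]_(n, p)) i j :
  continuous (fun X : 'M[R]_(m, n) => (X *m M) i j).
Proof.
under eq_fun do rewrite mxE.
apply: continuous_sum => k X; apply: continuousM; last exact: cst_continuous.
exact: coord_continuous.
Qed.

End MatrixContinuity.

Lemma exists_ratio_ge (R : realFieldType) (J : finType) (U V : J -> R) (c : R) :
  (forall j, 0 <= U j) -> (forall j, U j = 0 -> V j <= 0) -> 0 < \sum_j U j ->
  c * \sum_j U j <= \sum_j V j -> exists j, 0 < U j /\ c * U j <= V j.
Proof.
move=> U_ge0 V_le0 sumU_gt0 le_sum; apply: contrapT => none.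
have D_ge0 j : 0 <= c * U j - V j.
  have [Uj0|Uj_neq0] := eqVneq (U j) 0; first by rewrite Uj0 mulr0 sub0r oppr_ge0 V_le0.
  rewrite subr_ge0 leNgt; apply/negP => lt_cUV; apply: none; exists j.
  by rewrite lt0r Uj_neq0 U_ge0 (ltW lt_cUV).
have /(psumr_eq0P (fun j _ => D_ge0 j)) D_eq0 : \sum_j (c * U j - V j) = 0.
  apply/eqP; rewrite eq_le sumr_ge0 // andbT.
  by rewrite sumrB -mulr_sumr subr_le0.
move: sumU_gt0; rewrite big1 ?ltxx // => j _.
apply/eqP; rewrite eq_le U_ge0 andbT leNgt; apply/negP => Uj_gt0.
by apply: none; exists j; split => //; have := D_eq0 j isT; lra.
Qed.

Section Balls.
Context {R : realType}.

(* Only finitely many distances occur, so the balls do not change just above [W]. *)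
Lemma ball_w_locally_constant {A : finType} (d : A -> A -> R) (W : R) :
  exists2 del, 0 < del & forall w a x,
    W <= w <= W + del -> (x \in ball_w d a w) = (x \in ball_w d a W).
Proof.
pose gap (p : A * A) := if W / 2 < d p.1 p.2 then d p.1 p.2 - W / 2 else 1.
have gap_gt0 p : 0 < gap p by rewrite /gap; case: ifP; rewrite ?subr_gt0.
exists (\big[Order.min/1]_p gap p).
  by elim/big_ind: _ => // x y x0 y0; rewrite lt_min x0 y0.
move=> w a x /andP[Ww wW]; rewrite !unfold_in /=; apply/idP/idP => dxa; last first.
  by apply: le_trans dxa _; rewrite ler_pM2r //; lra.
rewrite leNgt; apply/negP => W_lt.
have : \big[Order.min/1]_p gap p <= gap (x, a) by rewrite (bigD1 (x, a)) //= ge_min lexx.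
rewrite /gap /= W_lt; lra.
Qed.

Lemma inf_le_of_itv (S : set R) (W del : R) : has_lbound S -> 0 < del ->
  (forall w, W < w <= W + del -> S w) -> inf S <= W.
Proof.
move=> S_lb del0 S_itv; apply/ler_addgt0Pr => e e0.
have Wm_itv : W < W + Order.min e del <= W + del.
  by rewrite ltrDl lt_min e0 del0 lerD2l ge_min lexx orbT.
apply: le_trans (ge_inf S_lb (S_itv _ Wm_itv)) _.
by rewrite lerD2l ge_min lexx.
Qed.

Lemma overall_width_le (N : nat) (A : finType) (d : A -> A -> R) (f : A -> 'rV[R]_N.+1)
    (eps W : R) (om : 'rV[R]_N.+1) :
  0 <= W -> (exists a, 1 - eps <= \sum_(a' in ball_w d a W) pair (f a') om) ->
  overall_width d f eps om <= W.
Proof.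
move=> W0 [a f_ge]; have [del del0 ball_cst] := ball_w_locally_constant d W.
apply: inf_le_of_itv del0 _ => [|w /andP[Ww wW]]; first by exists 0 => x [/ltW].
split; first exact: le_lt_trans Ww.
by exists a; rewrite (eq_bigl _ _ (ball_cst w a ^~ _)) // ltW.
Qed.

End Balls.

Section Pairing.
Context {R : realType} {N : nat}.
Local Notation vec := 'rV[R]_(N.+1).

Lemma pairDl (a b x : vec) : pair (a + b) x = pair a x + pair b x.
Proof. by rewrite /pair -big_split; apply: eq_bigr => i _; rewrite mxE mulrDl. Qed.

Lemma pairZl (c : R) (a x : vec) : pair (c *: a) x = c * pair a x.
Proof. by rewrite /pair mulr_sumr; apply: eq_bigr => i _; rewrite mxE mulrA. Qed.

Lemma pairC (a x : vec) : pair a x = pair x a.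
Proof. by apply: eq_bigr => i _; rewrite mulrC. Qed.

Lemma pairZr (c : R) (a x : vec) : pair a (c *: x) = c * pair a x.
Proof. by rewrite !(pairC a) pairZl. Qed.

Lemma pair0l (x : vec) : pair 0 x = 0.
Proof. by rewrite -(scale0r 0) pairZl mul0r. Qed.

Lemma pair0r (a : vec) : pair a 0 = 0.
Proof. by rewrite pairC pair0l. Qed.

Lemma pairBl (a b x : vec) : pair (a - b) x = pair a x - pair b x.
Proof. by rewrite pairDl -scaleN1r pairZl mulN1r. Qed.

Lemma pairBr (a x y : vec) : pair a (x - y) = pair a x - pair a y.
Proof. by rewrite !(pairC a) pairBl. Qed.

Lemma pair_suml (J : finType) (P : pred J) (F : J -> vec) x :
  pair (\sum_(j | P j) F j) x = \sum_(j | P j) pair (F j) x.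
Proof. by elim/big_rec2: _ => [|j s1 s2 _ <-]; rewrite ?pair0l ?pairDl. Qed.

Lemma pair_sumr (J : finType) (P : pred J) (F : J -> vec) a :
  pair a (\sum_(j | P j) F j) = \sum_(j | P j) pair a (F j).
Proof. by rewrite pairC pair_suml; apply: eq_bigr => j _; rewrite pairC. Qed.

Lemma pair_delta (a : vec) j : pair a (delta_mx 0 j) = a 0 j.
Proof.
rewrite /pair (bigD1 j) //= mxE !eqxx mulr1 big1 ?addr0 // => i /negbTE ij.
by rewrite mxE ij andbF mulr0.
Qed.

Lemma pair_inj (a b : vec) : (forall x, pair a x = pair b x) -> a = b.
Proof. by move=> eq_ab; apply/rowP => j; rewrite -!pair_delta. Qed.

Lemma pair_mulmx (a x : vec) (M : 'M[R]_(N.+1)) :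
  pair (a *m M) x = \sum_i \sum_j a 0 i * M i j * x 0 j.
Proof.
rewrite /pair exchange_big /=; apply: eq_bigr => j _.
by rewrite mxE mulr_suml.
Qed.

Lemma sum_marginalA (A B : finType) (m : A * B -> vec) :
  \sum_a marginalA m a = \sum_p m p.
Proof. by rewrite pair_big; apply: eq_bigr => -[]. Qed.

Lemma sum_marginalB (A B : finType) (m : A * B -> vec) :
  \sum_b marginalB m b = \sum_p m p.
Proof. by rewrite exchange_big pair_big; apply: eq_bigr => -[]. Qed.

End Pairing.

Section SelfDualGPT.
Context {R : realType} {N : nat}.
Local Notation vec := 'rV[R]_(N.+1).
Local Notation mat := 'M[R]_(N.+1).
Context {Om : set vec} {u : vec} {I : (mat -> R) -> R}.
Hypotheses (hOm : state_space Om) (hu : unit_effect Om u)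
  (htr : transitive_Om Om) (hI : haar_integral Om I) (hsd : self_dual Om I).

Local Notation B := (ip_GL I).

Let integrand_continuous (x y : vec) :
  {within GLOm Om, continuous (fun T : mat => dotE (x *m T) (y *m T))}.
Proof.
apply/continuous_subspaceT/continuous_sum => i T.
by apply: continuousM; exact: continuous_mulmxl_coord.
Qed.

Lemma ip_GLDl (x1 x2 y : vec) : B (x1 + x2) y = B x1 y + B x2 y.
Proof.
case: hI => hD _ _ _ _; rewrite /ip_GL -hD //.
by congr I; apply: funext => T; rewrite mulmxDl; exact: pairDl.
Qed.

Lemma ip_GLZl (c : R) (x y : vec) : B (c *: x) y = c * B x y.
Proof.
case: hI => _ hZ _ _ _; rewrite /ip_GL -hZ //.
by congr I; apply: funext => T; rewrite -scalemxAl; exact: pairZl.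
Qed.

Lemma ip_GLC (x y : vec) : B x y = B y x.
Proof. by congr I; apply: funext => T; exact: pairC. Qed.

Lemma ip_GL_ge0 (x : vec) : 0 <= B x x.
Proof.
case: hI => _ _ hpos _ _; apply: hpos => // T _.
by apply: sumr_ge0 => i _; exact: sqr_ge0.
Qed.

Lemma ip_GL_invariant (S : mat) (x y : vec) :
  GLOm Om S -> B (x *m S) (y *m S) = B x y.
Proof.
case: hI => _ _ _ _ hinv GS; rewrite /ip_GL -(hinv S _ GS (integrand_continuous x y)).
by congr I; apply: funext => T; rewrite !mulmxA.
Qed.

Lemma ip_GLZr (c : R) (x y : vec) : B x (c *: y) = c * B x y.
Proof. by rewrite ip_GLC ip_GLZl ip_GLC. Qed.

Lemma ip_GLDr (x y1 y2 : vec) : B x (y1 + y2) = B x y1 + B x y2.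
Proof. by rewrite ip_GLC ip_GLDl !(ip_GLC x). Qed.

Lemma ip_GLBl (x1 x2 y : vec) : B (x1 - x2) y = B x1 y - B x2 y.
Proof. by rewrite ip_GLDl -scaleN1r ip_GLZl mulN1r. Qed.

Lemma ip_GL_suml (J : finType) (F : J -> vec) y :
  B (\sum_j F j) y = \sum_j B (F j) y.
Proof.
elim/big_rec2: _ => [|j s1 s2 _ <-]; last by rewrite ip_GLDl.
by rewrite -(scale0r 0) ip_GLZl mul0r.
Qed.

Lemma ip_GL_sqrBr (x y : vec) :
  B (x - y) (x - y) = B x x - 2 * B x y + B y y.
Proof. by rewrite !ip_GLBl !(ip_GLC _ (x - y)) !ip_GLBl (ip_GLC y x); ring. Qed.

Definition gram : mat := \matrix_(i, j) B (delta_mx 0 i) (delta_mx 0 j).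

Lemma ip_GL_gram (x y : vec) : B x y = pair (x *m gram) y.
Proof.
rewrite pair_mulmx {1}(row_sum_delta x) ip_GL_suml; apply: eq_bigr => i _.
rewrite ip_GLZl ip_GLC {1}(row_sum_delta y) ip_GL_suml mulr_sumr.
by apply: eq_bigr => j _; rewrite ip_GLZl mxE ip_GLC mulrA mulrAC.
Qed.

Lemma Om_cone {x : vec} : Om x -> cone Om x.
Proof. by move=> Ox; exists 1, x; rewrite scale1r. Qed.

Lemma cone_ip_GL_ge0 {x y : vec} : cone Om x -> cone Om y -> 0 <= B x y.
Proof. by move=> Cx; rewrite hsd => /(_ x Cx). Qed.

Lemma cone_u_ge0 {x : vec} : cone Om x -> 0 <= pair u x.
Proof. by case=> l [w [l0 [Ow ->]]]; rewrite pairZr hu // mulr1. Qed.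

Lemma cone_u_eq0 {x : vec} : cone Om x -> pair u x = 0 -> x = 0.
Proof. by case=> l [w [l0 [Ow ->]]]; rewrite pairZr hu // mulr1 => ->; rewrite scale0r. Qed.

Lemma cone_u_gt0 {x : vec} : cone Om x -> x != 0 -> 0 < pair u x.
Proof.
move=> Cx x0; rewrite lt0r cone_u_ge0 // andbT.
by apply: contra_neq x0; exact: cone_u_eq0.
Qed.

Definition state_of (x : vec) : vec := (pair u x)^-1 *: x.

Lemma pair_state_of (e x : vec) : pair e (state_of x) = pair e x / pair u x.
Proof. by rewrite pairZr mulrC. Qed.

Lemma state_ofK (x : vec) : pair u x != 0 -> pair u x *: state_of x = x.
Proof. by move=> ux0; rewrite scalerA mulfV // scale1r. Qed.

Lemma cone_state_of {x : vec} : cone Om x -> x != 0 -> Om (state_of x).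
Proof.
case=> l [w [l0 [Ow ->]]] lw0; rewrite /state_of pairZr hu // mulr1 scalerA mulVf ?scale1r //.
by apply: contra_neq lw0 => ->; rewrite scale0r.
Qed.

Lemma Om_scale_inj (a b : R) (y w : vec) :
  Om y -> Om w -> a != 0 -> a *: y = b *: w -> y = w.
Proof.
move=> Oy Ow a0 ayw; have := congr1 (pair u) ayw; rewrite !pairZr !hu // !mulr1.
by move=> ab; apply: (scalerI a0); rewrite ayw ab.
Qed.

(* Self-duality places [x] and [-x] in the cone, and the only such vector is [0]. *)
Lemma ip_GL_nondegenerate (x : vec) : (forall y, B x y = 0) -> x = 0.
Proof.
move=> x0.
have Cx : cone Om x by rewrite hsd => z _; rewrite ip_GLC x0.
have CNx : cone Om (- x).
  by rewrite hsd => z _; rewrite ip_GLC -scaleN1r ip_GLZl x0 mulr0.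
apply: cone_u_eq0 => //; have := cone_u_ge0 Cx; have := cone_u_ge0 CNx.
rewrite -scaleN1r pairZr; lra.
Qed.

Lemma gram_unit : gram \in unitmx.
Proof.
rewrite -row_free_unit -kermx_eq0; apply/eqP/row_matrixP => i; rewrite row0.
have ker_i : row i (kermx gram) *m gram = 0 by apply/sub_kermxP; exact: row_sub.
by apply: ip_GL_nondegenerate => y; rewrite ip_GL_gram ker_i pair0l.
Qed.

Definition rep (e : vec) : vec := e *m invmx gram.

Lemma repK (e : vec) : rep e *m gram = e.
Proof. exact: mulmxKV gram_unit e. Qed.

Lemma repZ (a : R) (e : vec) : rep (a *: e) = a *: rep e.
Proof. by rewrite /rep scalemxAl. Qed.

Lemma repB (e f : vec) : rep (e - f) = rep e - rep f.
Proof. exact: mulmxBl. Qed.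

Lemma rep_sum (J : finType) (F : J -> vec) : rep (\sum_j F j) = \sum_j rep (F j).
Proof. exact: mulmx_suml. Qed.

Lemma rep_gram (x : vec) : rep (x *m gram) = x.
Proof. exact: mulmxK gram_unit x. Qed.

Lemma ip_GL_rep (e x : vec) : B (rep e) x = pair e x.
Proof. by rewrite ip_GL_gram repK. Qed.

Lemma pair_rep_sym (e f : vec) : pair e (rep f) = pair f (rep e).
Proof. by rewrite -ip_GL_rep ip_GLC ip_GL_rep. Qed.

Lemma rep_eq0 (e : vec) : (rep e == 0) = (e == 0).
Proof.
apply/eqP/eqP => [re0|->]; last by rewrite /rep mul0mx.
by rewrite -(repK e) re0 mul0mx.
Qed.

Lemma cone_rep {e : vec} : effects Om e -> cone Om (rep e).
Proof.
move=> Ee; rewrite hsd => _ [l [w [l0 [Ow ->]]]].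
by rewrite ip_GLC ip_GL_rep pairZr mulr_ge0 //; case/andP: (Ee w Ow).
Qed.

Lemma ip_GL_eq0 {x : vec} : B x x = 0 -> x = 0.
Proof.
move=> xx0; apply: ip_GL_nondegenerate => y; apply/eqP/negPn/negP => xy0.
have c0 := ip_GL_ge0 y; set b := B x y in xy0; set c := B y y in c0.
pose t := b / (c + 1).
have bt : b = t * (c + 1) by rewrite /t mulfVK // gt_eqF //; lra.
have t0 : t != 0 by apply: contra_neq xy0; rewrite bt => ->; rewrite mul0r.
have := ip_GL_ge0 (x - t *: y).
rewrite ip_GL_sqrBr xx0 ip_GLZl !ip_GLZr -/b -/c bt.
have : 0 < t ^+ 2 by rewrite exprn_even_gt0 // t0 orbT.
nra.
Qed.

Lemma pair_eq0_on_Om (e : vec) : (forall x, Om x -> pair e x = 0) -> e = 0.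
Proof.
case: hOm => _ _ span _ e0; apply: pair_inj => x; rewrite pair0l.
have [n [c [w [Ow ->]]]] := span x.
by rewrite pair_sumr big1 // => i _; rewrite pairZr e0 ?mulr0.
Qed.

Lemma Om_nonempty : Om !=set0.
Proof.
have [//|Om0] := pselect (Om !=set0).
have : const_mx 1 = 0 :> vec by apply: pair_eq0_on_Om => x Ox; case: Om0; exists x.
by move/rowP/(_ ord0)/eqP; rewrite !mxE oner_eq0.
Qed.

Lemma ip_GL_convex_comb (t : R) (y z : vec) :
  B (t *: y + (1 - t) *: z) (t *: y + (1 - t) *: z) =
  t * B y y + (1 - t) * B z z - t * (1 - t) * B (y - z) (y - z).
Proof.
by rewrite ip_GL_sqrBr !ip_GLDl !ip_GLDr !ip_GLZl !ip_GLZr (ip_GLC z y); ring.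
Qed.

(* [x |-> B x x] is strictly convex, by definiteness. *)
Lemma ip_GL_argmax_extreme {w : vec} :
  Om w -> (forall x, Om x -> B x x <= B w w) -> extreme Om w.
Proof.
move=> Ow wmax; split=> // y z t Oy Oz /andP[t0 t1] wyz.
have yz0 : B (y - z) (y - z) = 0.
  have := ip_GL_convex_comb t y z; rewrite -wyz.
  have := wmax y Oy; have := wmax z Oz; have := ip_GL_ge0 (y - z).
  have : 0 < t * (1 - t) by rewrite mulr_gt0 // subr_gt0.
  nra.
have /eqP := ip_GL_eq0 yz0; rewrite subr_eq0 => /eqP eq_yz.
by rewrite wyz -eq_yz -scalerDl addrC subrK scale1r.
Qed.

(* Compactness gives one extreme maximiser, transitivity and invariance carry it to all. *)
Lemma ip_GL_le_extreme_norm {w x : vec} : extreme Om w -> Om x -> B x x <= B w w.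
Proof.
have cont_norm : continuous (fun x : vec => B x x).
  under eq_fun do rewrite ip_GL_gram.
  apply: continuous_sum => i x0; apply: continuousM; last exact: coord_continuous.
  exact: continuous_mulmxr_coord.
case: hOm => cOm _ _ _.
have [w0 /set_mem Ow0 w0max] :=
  compact_EVT_max Om_nonempty cOm (continuous_subspaceT cont_norm).
have {}w0max x0 : Om x0 -> B x0 x0 <= B w0 w0 by move=> Ox0; apply/w0max/mem_set.
move=> ext_w Ox; have [T GT <-] := htr _ _ (ip_GL_argmax_extreme Ow0 w0max) ext_w.
by rewrite ip_GL_invariant // w0max.
Qed.

Lemma ip_GL_le_extreme {w x : vec} : extreme Om w -> Om x -> B w x <= B w w.
Proof.
move=> ext_w Ox; have := ip_GL_ge0 (w - x); rewrite ip_GL_sqrBr.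
have := ip_GL_le_extreme_norm ext_w Ox; lra.
Qed.

Lemma effects_summand {e e1 e2 : vec} : effects Om e -> e = e1 + e2 ->
  (forall x, Om x -> 0 <= pair e1 x) -> (forall x, Om x -> 0 <= pair e2 x) ->
  effects Om e1.
Proof.
move=> Ee e12 e1_ge0 e2_ge0 x Ox; rewrite e1_ge0 //=.
have := Ee x Ox; have := e2_ge0 x Ox; rewrite e12 pairDl; lra.
Qed.

Lemma gram_ge0 (s : R) (y x : vec) :
  0 <= s -> Om y -> Om x -> 0 <= pair (s *: (y *m gram)) x.
Proof.
move=> s0 Oy Ox; rewrite pairZl -ip_GL_gram mulr_ge0 //.
by apply: cone_ip_GL_ge0; exact: Om_cone.
Qed.

(* Both parts of a convex splitting of [state_of (rep e)] yield summands of [e],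
   which indecomposability forces to be proportional to [e]. *)
Lemma extreme_state_of_rep {e : vec} :
  effects Om e -> indecomposable Om e -> extreme Om (state_of (rep e)).
Proof.
move=> Ee [/eqP e0 dec]; have Ce := cone_rep Ee.
have re0 : rep e != 0 by rewrite rep_eq0.
set l := pair u (rep e); have l_gt0 : 0 < l := cone_u_gt0 Ce re0.
set w := state_of (rep e); have Ow : Om w := cone_state_of Ce re0.
have rew : rep e = l *: w by rewrite state_ofK ?gt_eqF.
split=> // y z t Oy Oz /andP[t0 t1] wyz.
have e_yz : e = (l * t) *: (y *m gram) + (l * (1 - t)) *: (z *m gram).
  by rewrite -(repK e) rew wyz scalerDr !scalerA mulmxDl -!scalemxAl.
have part_ge0 s v : 0 <= s -> Om v -> forall x, Om x -> 0 <= pair ((l * s) *: (v *m gram)) x.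
  by move=> s0 Ov x Ox; rewrite gram_ge0 // mulr_ge0 // ltW.
have part_eq s v : 0 < s -> Om v -> (exists c, (l * s) *: (v *m gram) = c *: e) -> v = w.
  move=> s0 Ov [c part_e]; apply: (@Om_scale_inj (l * s) (c * l)) => //.
    by rewrite mulf_neq0 ?gt_eqF.
  by have := congr1 rep part_e; rewrite !repZ rep_gram rew scalerA.
have t'0 : 0 < 1 - t by rewrite subr_gt0.
have ge0_y := part_ge0 _ _ (ltW t0) Oy; have ge0_z := part_ge0 _ _ (ltW t'0) Oz.
have [[c1 e1] [c2 e2]] := dec _ _ (effects_summand Ee e_yz ge0_y ge0_z)
  (effects_summand Ee (etrans e_yz (addrC _ _)) ge0_z ge0_y) e_yz.
by split; [apply: (part_eq t) => //; exists c1 | apply: (part_eq (1 - t)) => //; exists c2].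
Qed.

Lemma pure_effect_max_eq1 (e w : vec) : pure_effect Om e -> e != 0 -> Om w ->
  (forall x, Om x -> pair e x <= pair e w) -> pair e w = 1.
Proof.
move=> [Ee ext] e0 Ow emax.
have /andP[M0 M1] := Ee w Ow; set M := pair e w in M0 M1 emax *.
have M_gt0 : 0 < M.
  rewrite lt0r M0 andbT; apply: contra_neq e0 => M_eq0; apply: pair_eq0_on_Om => x Ox.
  have := emax x Ox; rewrite M_eq0 => ex_le0.
  by case/andP: (Ee x Ox) => ex_ge0 _; apply/eqP; rewrite eq_le ex_le0.
apply/eqP; rewrite eq_le M1 /= leNgt; apply/negP => M_lt1.
have EMe : effects Om (M^-1 *: e).
  move=> x Ox; rewrite pairZl ler_pdivrMl // mulr1 emax // andbT.
  by rewrite mulr_ge0 ?invr_ge0 //; case/andP: (Ee x Ox).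
have E0 : effects Om 0 by move=> x _; rewrite pair0l lexx ler01.
have /(ext _ _ M EMe E0) : 0 < M < 1 by rewrite M_gt0.
rewrite scalerA mulfV ?gt_eqF // scale1r scaler0 addr0 => /(_ erefl) [_ /esym/eqP].
by rewrite (negbTE e0).
Qed.

Lemma pair_rep_pure {e : vec} : pure_effect Om e -> indecomposable Om e ->
  pair e (rep e) = pair u (rep e).
Proof.
move=> Pe De; have Ee : effects Om e := Pe.1; have /eqP e0 := De.1.
have ext_w := extreme_state_of_rep Ee De.
have re0 : rep e != 0 by rewrite rep_eq0.
set l := pair u (rep e); have l_gt0 : 0 < l := cone_u_gt0 (cone_rep Ee) re0.
set w := state_of (rep e) in ext_w; have rew : rep e = l *: w by rewrite state_ofK ?gt_eqF.
have e_w x : pair e x = l * B w x by rewrite -ip_GL_rep rew ip_GLZl.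
have ew1 : pair e w = 1.
  apply: pure_effect_max_eq1 => //; first exact: ext_w.1.
  by move=> x Ox; rewrite !e_w ler_pM2l //; exact: ip_GL_le_extreme.
by rewrite {1}rew pairZr ew1 mulr1.
Qed.

Lemma effect_ge0 {e x : vec} : effects Om e -> cone Om x -> 0 <= pair e x.
Proof.
move=> Ee [l [w [l0 [Ow ->]]]]; rewrite pairZr mulr_ge0 //.
by case/andP: (Ee w Ow).
Qed.

Lemma effect_le_u {e x : vec} : effects Om e -> cone Om x -> pair e x <= pair u x.
Proof.
move=> Ee [l [w [l0 [Ow ->]]]]; rewrite !pairZr hu // mulr1 ler_piMr //.
by case/andP: (Ee w Ow).
Qed.

(* For [rep e != 0]: [e] takes the value 1 on the state [state_of (rep e)]. *)
Definition sharp_at_rep (e : vec) : Prop := pair e (rep e) = pair u (rep e).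

Lemma sharp_at_rep_sum n (e : 'I_n -> vec) :
  (forall i, pure_effect Om (e i) /\ indecomposable Om (e i)) ->
  effects Om (\sum_i e i) -> sharp_at_rep (\sum_i e i).
Proof.
move=> pure_e Ee; rewrite /sharp_at_rep rep_sum !pair_sumr; apply: eq_bigr => i _.
have [Pi Di] := pure_e i; have Ei : effects Om (e i) := Pi.1.
apply/eqP; rewrite eq_le (effect_le_u Ee (cone_rep Ei)) /=.
rewrite -(pair_rep_pure Pi Di) pair_suml (bigD1 i) //= lerDl.
by apply: sumr_ge0 => j _; apply: effect_ge0 (cone_rep Ei); exact: (pure_e j).1.1.
Qed.

Lemma sharp_at_rep_compl (e : vec) : sharp_at_rep e -> sharp_at_rep (u - e).
Proof.
rewrite /sharp_at_rep repB !pairBl !pairBr (pair_rep_sym e u); lra.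
Qed.

Lemma ideal_observable_sharp {X : finType} {f : X -> vec} :
  ideal_observable Om u f -> forall x, sharp_at_rep (f x).
Proof.
move=> [[Ef _] ideal_f] x; have [n [e [pure_e [fe|fe]]]] := ideal_f x.
  by rewrite fe; apply: sharp_at_rep_sum => //; rewrite -fe.
rewrite fe; apply/sharp_at_rep_compl/sharp_at_rep_sum => // w Ow.
have := Ef x w Ow; rewrite fe pairBl hu //; lra.
Qed.

Lemma sharp_at_rep_lower_bound (f h : vec) (eps : R) :
  effects Om f -> sharp_at_rep f ->
  (forall w, Om w -> pair f w = 1 -> 1 - eps <= pair h w) ->
  (1 - eps) * pair u (rep f) <= pair h (rep f).
Proof.
move=> Ef sharp_f h_ge; have Cf := cone_rep Ef.
have [->|rf0] := eqVneq (rep f) 0; first by rewrite !pair0r mulr0.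
have l_gt0 := cone_u_gt0 Cf rf0.
have := h_ge _ (cone_state_of Cf rf0).
rewrite !pair_state_of sharp_f mulfV ?gt_eqF // => /(_ erefl).
by rewrite ler_pdivlMr.
Qed.

Lemma observable_partial_sum {X : finType} {f : X -> vec} (P : pred X) {x : vec} :
  observable Om u f -> cone Om x -> 0 <= pair (\sum_(a | P a) f a) x <= pair u x.
Proof.
move=> [Ef <-] Cx; rewrite !pair_suml sumr_ge0 /= => [|a _]; last exact: effect_ge0.
by rewrite [leRHS](bigID P) /= lerDl sumr_ge0 // => a _; exact: effect_ge0.
Qed.

(* Average the error-bar condition over the vectors [rep (f a)], which sum to [rep u],
   and use the symmetry of [d] to exchange the two ball sums. *)
Lemma averaged_ball_mass {A : finType} {d : A -> A -> R} {f h : A -> vec} {eps w : R} :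
  (forall x y, d x y = d y x) -> observable Om u f -> (forall a, sharp_at_rep (f a)) ->
  (forall a om, Om om -> pair (f a) om = 1 ->
     1 - eps <= \sum_(a' in ball_w d a w) pair (h a') om) ->
  (1 - eps) * pair u (rep u) <= \sum_a pair (\sum_(a' in ball_w d a w) f a') (rep (h a)).
Proof.
move=> d_sym [Ef sum_f] sharp_f h_ge.
rewrite -{2}sum_f rep_sum pair_sumr mulr_sumr.
apply: (@le_trans _ _ (\sum_a pair (\sum_(a' in ball_w d a w) h a') (rep (f a)))).
  apply: ler_sum => a _; apply: sharp_at_rep_lower_bound => // om Oom fa1.
  by rewrite pair_suml; exact: h_ge.
under eq_bigr do rewrite pair_suml.
under [leRHS]eq_bigr do rewrite pair_suml.
rewrite (exchange_big_dep predT) //= le_eqVlt; apply/orP; left; apply/eqP/eq_bigr => a _.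
by apply: eq_big => [a'|a' _]; [rewrite !unfold_in /= d_sym | exact: pair_rep_sym].
Qed.

Lemma u_rep_u_gt0 : 0 < pair u (rep u).
Proof.
have Eu : effects Om u by move=> x Ox; rewrite hu // ler01 lexx.
apply: cone_u_gt0 (cone_rep Eu) _; rewrite rep_eq0.
have [x Ox] := Om_nonempty; apply: contra_eq_neq (hu x Ox) => ->.
by rewrite pair0l eq_sym oner_neq0.
Qed.

(* The three sums below are the expectations, against the vector [rep (m p)], of the
   F-ball around [p.1], the G-ball around [p.2] and the unit effect.  Some [p] carries
   at least its share of both error-bar bounds; the state proportional to [rep (m p)]
   then satisfies both. *)
Lemma exists_state_in_balls {A B : finType} {dA : A -> A -> R} {dB : B -> B -> R}
    {f : A -> vec} {g : B -> vec} {m : A * B -> vec} {eps1 eps2 w1 w2 : R} :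
  (forall x y, dA x y = dA y x) -> (forall x y, dB x y = dB y x) ->
  observable Om u f -> (forall a, sharp_at_rep (f a)) ->
  observable Om u g -> (forall b, sharp_at_rep (g b)) -> observable Om u m ->
  (forall a om, Om om -> pair (f a) om = 1 ->
     1 - eps1 <= \sum_(a' in ball_w dA a w1) pair (marginalA m a') om) ->
  (forall b om, Om om -> pair (g b) om = 1 ->
     1 - eps2 <= \sum_(b' in ball_w dB b w2) pair (marginalB m b') om) ->
  exists2 om, Om om &
    (exists a, 1 - (eps1 + eps2) <= \sum_(a' in ball_w dA a w1) pair (f a') om) /\
    (exists b, 1 - (eps1 + eps2) <= \sum_(b' in ball_w dB b w2) pair (g b') om).
Proof.
move=> dA_sym dB_sym obs_f sharp_f obs_g sharp_g obs_m f_ge g_ge.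
have Cm p : cone Om (rep (m p)) := cone_rep (obs_m.1 p).
pose X p := pair (\sum_(a in ball_w dA p.1 w1) f a) (rep (m p)).
pose Y p := pair (\sum_(b in ball_w dB p.2 w2) g b) (rep (m p)).
pose U p := pair u (rep (m p)).
have XU p : 0 <= X p <= U p := observable_partial_sum _ obs_f (Cm p).
have YU p : 0 <= Y p <= U p := observable_partial_sum _ obs_g (Cm p).
have sumU : \sum_p U p = pair u (rep u) by rewrite -pair_sumr -rep_sum obs_m.2.
have sumX : (1 - eps1) * \sum_p U p <= \sum_p X p.
  have -> : \sum_p X p = \sum_a \sum_b X (a, b) by rewrite [RHS]pair_big; apply: eq_bigr => -[].
  rewrite sumU; apply: le_trans (averaged_ball_mass dA_sym obs_f sharp_f f_ge) _.
  by rewrite le_eqVlt; apply/orP; left; apply/eqP/eq_bigr => a _; rewrite rep_sum pair_sumr.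
have sumY : (1 - eps2) * \sum_p U p <= \sum_p Y p.
  have -> : \sum_p Y p = \sum_b \sum_a Y (a, b).
    by rewrite [RHS]exchange_big [RHS]pair_big; apply: eq_bigr => -[].
  rewrite sumU; apply: le_trans (averaged_ball_mass dB_sym obs_g sharp_g g_ge) _.
  by rewrite le_eqVlt; apply/orP; left; apply/eqP/eq_bigr => b _; rewrite rep_sum pair_sumr.
have [p [Up_gt0 XYp]] : exists p, 0 < U p /\ (2 - eps1 - eps2) * U p <= X p + Y p.
  apply: exists_ratio_ge => [p|p Up0||].
  - exact: cone_u_ge0.
  - by have := XU p; have := YU p; rewrite Up0; lra.
  - by rewrite sumU u_rep_u_gt0.
  - by rewrite big_split /=; have := sumX; have := sumY; lra.
have rmp0 : rep (m p) != 0 by apply: contraTneq Up_gt0; rewrite /U => ->; rewrite pair0r ltxx.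
exists (state_of (rep (m p))); first exact: cone_state_of.
have := XU p; have := YU p; rewrite /X /Y /U in XYp Up_gt0 * => /andP[_ Yp] /andP[_ Xp].
by split; [exists p.1 | exists p.2]; rewrite -pair_suml pair_state_of ler_pdivlMr //; lra.
Qed.

Lemma error_bar_width_attained {A : finType} (d : A -> A -> R) {ft : A -> vec} (f : A -> vec)
    {eps : R} :
  \sum_a ft a = u -> 0 <= eps ->
  0 <= error_bar_width Om d ft f eps /\
  forall a om, Om om -> pair (f a) om = 1 ->
    1 - eps <= \sum_(a' in ball_w d a (error_bar_width Om d ft f eps)) pair (ft a') om.
Proof.
move=> sum_ft eps0; rewrite /error_bar_width; set S := (X in inf X).
have S_lb : lbound S 0 by move=> w [/ltW].
have S_ne : S !=set0.
  pose w0 := 2 * \sum_(p : A * A) `|d p.1 p.2| + 1.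
  have dw0 x a : d x a <= w0 / 2.
    have : `|d x a| <= \sum_(p : A * A) `|d p.1 p.2|.
      by rewrite (bigD1 (x, a)) //= lerDl sumr_ge0.
    have := ler_norm (d x a); rewrite /w0; lra.
  exists w0; split=> [|a om Oom _].
    have : 0 <= \sum_(p : A * A) `|d p.1 p.2| by rewrite sumr_ge0.
    rewrite /w0; lra.
  rewrite (eq_bigl predT) => [|x]; last by rewrite unfold_in /= dw0.
  by rewrite -pair_suml sum_ft hu // lerBlDr lerDl.
have W0 : 0 <= inf S := lb_le_inf S_ne S_lb.
split=> // a om Oom fa1.
have [del del0 ball_cst] := ball_w_locally_constant d (inf S).
have W_lt : inf S < inf S + del by rewrite ltrDl.
have [y Sy y_lt] := inf_lt S_ne W_lt.
rewrite -(eq_bigl _ _ (ball_cst y a ^~ _)); first exact: Sy.2.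
by rewrite (ge_inf (ex_intro _ 0 S_lb) Sy) (ltW y_lt).
Qed.

End SelfDualGPT.

Theorem theorem3p1 (R : realType) (N : nat) (Om : set 'rV[R]_(N.+1)) (u : 'rV[R]_(N.+1))
  (I : ('M[R]_(N.+1) -> R) -> R)
  (A B : finType) (dA : A -> A -> R) (dB : B -> B -> R)
  (f : A -> 'rV[R]_(N.+1)) (g : B -> 'rV[R]_(N.+1)) (m : A * B -> 'rV[R]_(N.+1))
  (eps1 eps2 : R) :
  state_space Om -> unit_effect Om u ->
  transitive_Om Om -> haar_integral Om I -> self_dual Om I ->
  metric dA -> metric dB -> (1 < #|A|)%N -> (1 < #|B|)%N ->
  ideal_observable Om u f -> ideal_observable Om u g ->
  observable Om u m ->
  0 <= eps1 <= 1 -> 0 <= eps2 <= 1 -> eps1 + eps2 <= 1 ->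
  exists om : 'rV[R]_(N.+1), Om om /\
    overall_width dA f (eps1 + eps2) om <= error_bar_width Om dA (marginalA m) f eps1 /\
    overall_width dB g (eps1 + eps2) om <= error_bar_width Om dB (marginalB m) g eps2.
Proof.
move=> hOm hu htr hI hsd [_ _ dA_sym _] [_ _ dB_sym _] _ _ ideal_f ideal_g obs_m
  /andP[eps1_ge0 _] /andP[eps2_ge0 _] _.
have sum_mA : \sum_a marginalA m a = u by rewrite sum_marginalA obs_m.2.
have sum_mB : \sum_b marginalB m b = u by rewrite sum_marginalB obs_m.2.
have [W1_ge0 W1_bar] := error_bar_width_attained hu dA f sum_mA eps1_ge0.
have [W2_ge0 W2_bar] := error_bar_width_attained hu dB g sum_mB eps2_ge0.
have sharp_f := ideal_observable_sharp hOm hu htr hI hsd ideal_f.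
have sharp_g := ideal_observable_sharp hOm hu htr hI hsd ideal_g.
have [om Oom [F_ball G_ball]] := exists_state_in_balls hOm hu hI hsd dA_sym dB_sym
  ideal_f.1 sharp_f ideal_g.1 sharp_g obs_m W1_bar W2_bar.
by exists om; split; [|split; exact: overall_width_le].
Qed.
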